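(* Assume the setting in the context, with a decomposition of $\mathcal X$ over $A$, $g\in\mathcal G_s$, an integer $T>0$, and $$\operatorname*{argmin}_{u\in\mathcal U} J^*_{t+1}(Ax+Bu)\cap\Big[\bigoplus_{i\in\mathcal I}\mathcal E_i\Big]\neq\emptyset\quad\text{for all }x\in\mathcal X,\ t\in\{0,\dots,T-1\}.$$ Then for every $t\in\{0,\dots,T\}$ and every $i\in\mathcal I$, the restriction of $J^*_t$ to $\mathcal X_i$ equals $\bar J^*_{i,t}$, i.e. $J^*_t(z)=\bar J^*_{i,t}(z)$ for all $z\in\mathcal X_i$.
   Context: Let $\mathcal F$ be a field and $\mathcal X,\mathcal U$ finite-dimensional vector spaces over $\mathcal F$. Let $A:\mathcal X\to\mathcal X$ and $B:\mathcal U\to\mathcal X$ be linear maps with $B$ injective, and let $g:\mathcal X\to\mathbb R_{\ge0}$ satisfy $g(x)=0\iff x=0$. Standing assumption: all minima appearing below are attained. For the finite-horizon problem $(A,B,g,T)$ associated with $x_{t+1}=Ax_t+Bu_t$, the cost-to-go functions are $J^*_T=g$ and $J^*_t(x)=g(x)+\min_{u\in\mathcal U}J^*_{t+1}(Ax+Bu)$ for $t=0,\dots,T-1$. A decomposition of $\mathcal X$ over $A$ is a direct sum $\mathcal X=\mathcal X_1\oplus\cdots\oplus\mathcal X_r$ with $r>1$ and $A\mathcal X_i\subseteq\mathcal X_i$ for all $i\in\mathcal I=\{1,\dots,r\}$; $\rho_i:\mathcal X\to\mathcal X_i$ is the projection along the other summands. $\mathcal G_s$ is the set of $h:\mathcal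 X\to\mathbb R_{\ge0}$ with $h(x)=\sum_i h(\rho_i(x))$ for all $x$. $\mathcal E_i=\{u\in\mathcal U:Bu\in\mathcal X_i\}$. For the subproblem $(A,B|_{\mathcal E_i},g,T)$ (system $x_{i,t+1}=Ax_{i,t}+B\bar u_{i,t}$, states in $\mathcal X_i$, inputs in $\mathcal E_i$), the cost-to-go functions $\bar J^*_{i,t}:\mathcal X_i\to\mathbb R_{\ge0}$ are $\bar J^*_{i,T}=g|_{\mathcal X_i}$ and $\bar J^*_{i,t}(z)=g(z)+\min_{u\in\mathcal E_i}\bar J^*_{i,t+1}(Az+Bu)$ for $t=0,\dots,T-1$. *)

From HB Require Import structures.
From mathcomp Require Import all_boot all_order all_algebra.
Set Implicit Arguments. Unset Strict Implicit. Unset Printing Implicit Defensive.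
Import Order.TTheory GRing.Theory Num.Theory.
Local Open Scope ring_scope.

Definition is_decomposition (F : fieldType) (X : vectType F) (A : 'End(X))
    (r : nat) (Xs : 'I_r -> {vspace X}) : Prop :=
  [/\ (1 < r)%N,
      (\sum_(i < r) Xs i)%VS = fullv,
      directv (\sum_(i < r) Xs i)%VS
    & forall i, (A @: Xs i <= Xs i)%VS].

Definition rho (F : fieldType) (X : vectType F) (r : nat)
    (Xs : 'I_r -> {vspace X}) (i : 'I_r) : 'End(X) :=
  sumv_pi (\sum_(j < r) Xs j)%VS i.

Definition in_Gs (F : fieldType) (X : vectType F) (R : realFieldType) (r : nat)
    (Xs : 'I_r -> {vspace X}) (h : X -> R) : Prop :=
  (forall x, 0 <= h x) /\ forall x, h x = \sum_(i < r) h (rho Xs i x).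

Definition Esub (F : fieldType) (X U : vectType F) (B : 'Hom(U, X))
    (S : {vspace X}) : {vspace U} := (B @^-1: S)%VS.

Definition is_min (T : Type) (R : realFieldType) (P : T -> Prop) (f : T -> R)
    (m : R) : Prop :=
  (exists2 u, P u & f u = m) /\ (forall u, P u -> m <= f u).

Definition in_argmin (T : Type) (R : realFieldType) (P : T -> Prop) (f : T -> R)
    (u : T) : Prop :=
  P u /\ (forall v, P v -> f u <= f v).

(* Values outside S are
   irrelevant. *)
Definition is_cost_to_go (F : fieldType) (X U : vectType F) (R : realFieldType)
    (A : 'End(X)) (B : 'Hom(U, X)) (E : {vspace U}) (S : {vspace X})
    (g : X -> R) (T : nat) (J : nat -> X -> R) : Prop :=
  (forall z, z \in S -> J T z = g z) /\
  (forall t, (t < T)%N -> forall z, z \in S ->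
     exists2 m, is_min (fun u => u \in E) (fun u => J t.+1 (A z + B u)) m
              & J t z = g z + m).

From HB Require Import structures.
From mathcomp Require Import all_boot all_order all_algebra.
Import Order.TTheory GRing.Theory Num.Theory.

Set Implicit Arguments.
Unset Strict Implicit.
Unset Printing Implicit Defensive.

Local Open Scope ring_scope.

(* The cost-to-go J_t is separable along the decomposition:
   J_t(x) = sum_i Jbar_{i,t}(rho_i x), by backward induction on t.  At t = T
   this is the separability of g.  For the induction step, since A commutes
   with every rho_i, an input u = sum_i u_i with u_i in E_i splits the cost
   J_{t+1}(A x + B u) into the independent costs Jbar_{i,t+1}(A rho_i x + B u_i),
   so the sum of the subproblem minima is attained, and by the argmin
   hypothesis it is also a lower bound for the full minimum.  Restricted to
   X_i, all other summands vanish because Jbar_{j,t}(0) = 0. *)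

Lemma leq_ind_down (T : nat) (P : nat -> Prop) :
  P T -> (forall t, (t < T)%N -> P t.+1 -> P t) -> forall t, (t <= T)%N -> P t.
Proof.
move=> PT PS t /subnK; move: (T - t)%N => k; elim: k t => [|k IHk] t eT.
  by rewrite -eT in PT.
by apply: PS; [rewrite -eT addSn ltnS leq_addl | apply: IHk; rewrite addnS -addSn].
Qed.

Lemma is_min_argmin (T : Type) (R : realFieldType) (P : T -> Prop) (f : T -> R) m :
  is_min P f m -> exists2 u, in_argmin P f u & f u = m.
Proof. by move=> [[u Pu <-] minf]; exists u. Qed.

Lemma argmin_is_min_eq (T : Type) (R : realFieldType) (P : T -> Prop) (f : T -> R) m u :
  is_min P f m -> in_argmin P f u -> f u = m.
Proof.
move=> [[v Pv <-] minf] [Pu minu].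
by apply/eqP; rewrite eq_le minu // minf.
Qed.

Section Projections.

Variables (F : fieldType) (X : vectType F) (r : nat) (Xs : 'I_r -> {vspace X}).
Hypotheses (Xs_full : (\sum_(i < r) Xs i)%VS = fullv)
           (Xs_direct : directv (\sum_(i < r) Xs i)).

Lemma rho_mem i x : rho Xs i x \in Xs i.
Proof. exact: memv_sum_pi. Qed.

Lemma sum_rho x : \sum_i rho Xs i x = x.
Proof. by apply: sumv_pi_sum; rewrite Xs_full memvf. Qed.

Lemma rho_sum (ys : 'I_r -> X) :
  (forall j, ys j \in Xs j) -> forall i, rho Xs i (\sum_j ys j) = ys i.
Proof.
move=> ys_in i; have /directv_sum_unique uniq_sum := Xs_direct.
have := uniq_sum (fun j => rho Xs j (\sum_j ys j)) ys (fun j _ => rho_mem j _).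
by rewrite sum_rho eqxx => /(_ (fun j _ => ys_in j))/esym/forall_inP/(_ i isT)/eqP.
Qed.

Lemma rho_summand i j z : z \in Xs i -> rho Xs j z = if j == i then z else 0.
Proof.
move=> z_in; have sum_z : \sum_k (if k == i then z else 0) = z.
  by rewrite (bigD1 i) //= eqxx big1 ?addr0 // => k /negPf ->.
by rewrite -{1}sum_z rho_sum // => k; case: eqP => [-> | _]; rewrite ?mem0v.
Qed.

Lemma rho_stable_comm (A : 'End(X)) :
  (forall i, (A @: Xs i <= Xs i)%VS) -> forall i x, rho Xs i (A x) = A (rho Xs i x).
Proof.
move=> A_stable i x; rewrite -{1}(sum_rho x) linear_sum rho_sum // => j.
exact: subvP (A_stable j) _ (memv_img A (rho_mem j x)).
Qed.

Lemma rho_sum_Esub (U : vectType F) (B : 'Hom(U, X)) (us : 'I_r -> U) :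
  (forall j, us j \in Esub B (Xs j)) -> forall i, rho Xs i (B (\sum_j us j)) = B (us i).
Proof. by move=> us_in i; rewrite linear_sum rho_sum // => j; rewrite memv_preim. Qed.

End Projections.

Section CostToGo.

Variables (F : fieldType) (X U : vectType F) (R : realFieldType).
Variables (A : 'End(X)) (B : 'Hom(U, X)) (E : {vspace U}) (S : {vspace X}).
Variables (g : X -> R) (T : nat) (J : nat -> X -> R).
Hypothesis J_cost : is_cost_to_go A B E S g T J.

Lemma cost_to_go_argmin t z : (t < T)%N -> z \in S ->
  exists2 u, in_argmin (fun v => v \in E) (fun v => J t.+1 (A z + B v)) u
           & J t z = g z + J t.+1 (A z + B u).
Proof.
move=> ltT z_in; have [m min_m ->] := J_cost.2 t ltT z z_in.
by have [u u_argmin <-] := is_min_argmin min_m; exists u.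
Qed.

Lemma cost_to_go_at_argmin t z u : (t < T)%N -> z \in S ->
  in_argmin (fun v => v \in E) (fun v => J t.+1 (A z + B v)) u ->
  J t z = g z + J t.+1 (A z + B u).
Proof.
move=> ltT z_in u_argmin; have [m min_m ->] := J_cost.2 t ltT z z_in.
by rewrite (argmin_is_min_eq min_m u_argmin).
Qed.

Hypotheses (g_ge0 : forall x, 0 <= g x) (g0 : g 0 = 0).
Hypotheses (A_stable : forall z, z \in S -> A z \in S)
           (B_into : forall u, u \in E -> B u \in S).

Lemma cost_to_go_ge0 t : (t <= T)%N -> forall z, z \in S -> 0 <= J t z.
Proof.
move: t; apply: leq_ind_down => [|t ltT IH] z z_in; first by rewrite J_cost.1.
have [u [u_in _] ->] := cost_to_go_argmin ltT z_in.
by rewrite addr_ge0 // IH // memvD ?A_stable ?B_into.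
Qed.

Lemma cost_to_go0 t : (t <= T)%N -> J t 0 = 0.
Proof.
move: t; apply: leq_ind_down => [|t ltT IH]; first by rewrite J_cost.1 ?mem0v.
have [u [u_in u_min] ->] := cost_to_go_argmin ltT (mem0v S).
have := u_min 0 (mem0v E); rewrite g0 !linear0 !add0r IH // => le0.
by apply/eqP; rewrite eq_le le0 cost_to_go_ge0 ?B_into.
Qed.

End CostToGo.

Section Separability.

Variables (F : fieldType) (X U : vectType F) (R : realFieldType).
Variables (A : 'End(X)) (B : 'Hom(U, X)) (g : X -> R).
Variables (r : nat) (Xs : 'I_r -> {vspace X}) (T : nat).
Variables (J : nat -> X -> R) (Jbar : 'I_r -> nat -> X -> R).
Hypotheses (Xs_full : (\sum_(i < r) Xs i)%VS = fullv)
           (Xs_direct : directv (\sum_(i < r) Xs i))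
           (A_stable : forall i, (A @: Xs i <= Xs i)%VS).
Hypothesis g_sep : forall x, g x = \sum_i g (rho Xs i x).
Hypothesis J_cost : is_cost_to_go A B fullv fullv g T J.
Hypothesis Jbar_cost : forall i, is_cost_to_go A B (Esub B (Xs i)) (Xs i) g T (Jbar i).
Hypothesis argmin_in_sum : forall x t, (t < T)%N ->
  exists u, in_argmin (fun _ => True) (fun v => J t.+1 (A x + B v)) u
            /\ u \in (\sum_(i < r) Esub B (Xs i))%VS.

Lemma rho_transition x (us : 'I_r -> U) : (forall j, us j \in Esub B (Xs j)) ->
  forall i, rho Xs i (A x + B (\sum_j us j)) = A (rho Xs i x) + B (us i).
Proof.
move=> us_in i.
rewrite -(rho_stable_comm Xs_full Xs_direct A_stable).
by rewrite -(rho_sum_Esub Xs_full Xs_direct us_in) linearD.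
Qed.

Lemma cost_to_go_sep_step t : (t < T)%N ->
  (forall y, J t.+1 y = \sum_i Jbar i t.+1 (rho Xs i y)) ->
  forall x, J t x = \sum_i Jbar i t (rho Xs i x).
Proof.
move=> ltT J_sep x.
pose cost (ws : 'I_r -> U) := \sum_i Jbar i t.+1 (A (rho Xs i x) + B (ws i)).
have J_cost_sum ws : (forall j, ws j \in Esub B (Xs j)) ->
    J t.+1 (A x + B (\sum_j ws j)) = cost ws.
  by move=> ws_in; rewrite J_sep; apply: eq_bigr => i _; rewrite rho_transition.
have /fin_all_exists[us us_spec] : forall i, exists u : U,
    in_argmin (fun v => v \in Esub B (Xs i))
              (fun v => Jbar i t.+1 (A (rho Xs i x) + B v)) u
    /\ Jbar i t (rho Xs i x) = g (rho Xs i x) + Jbar i t.+1 (A (rho Xs i x) + B u).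
  move=> i; have [u u_argmin Jbar_u] :=
    cost_to_go_argmin (Jbar_cost i) ltT (rho_mem Xs i x).
  by exists u.
have us_in j : us j \in Esub B (Xs j) by have [[]] := us_spec j.
have [u [[_ u_min] /memv_sumP[vs vs_in def_u]]] := argmin_in_sum x ltT.
have vs_in' j : vs j \in Esub B (Xs j) := vs_in j isT.
have u_argmin : in_argmin (fun v => v \in fullv) (fun v => J t.+1 (A x + B v)) u.
  by split=> [|v _]; rewrite ?memvf ?u_min.
rewrite (cost_to_go_at_argmin J_cost ltT (memvf x) u_argmin) def_u J_cost_sum //.
under [RHS]eq_bigr => i _ do rewrite (us_spec i).2.
rewrite big_split /= -g_sep; congr (_ + _); apply/eqP; rewrite eq_le.
apply/andP; split.
  by rewrite -/(cost us) -(J_cost_sum vs vs_in') -(J_cost_sum us us_in) -def_u u_min.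
by apply: ler_sum => i _; apply: (us_spec i).1.2.
Qed.

Lemma cost_to_go_sep t : (t <= T)%N -> forall x, J t x = \sum_i Jbar i t (rho Xs i x).
Proof.
move: t; apply: leq_ind_down => [|t ltT]; last exact: cost_to_go_sep_step.
move=> x; rewrite J_cost.1 ?memvf // g_sep.
by apply: eq_bigr => i _; rewrite (Jbar_cost i).1 ?rho_mem.
Qed.

End Separability.

Theorem proposition3 (F : fieldType) (X U : vectType F) (R : realFieldType)
    (A : 'End(X)) (B : 'Hom(U, X)) (g : X -> R)
    (r : nat) (Xs : 'I_r -> {vspace X}) (T : nat)
    (J : nat -> X -> R) (Jbar : 'I_r -> nat -> X -> R) :
  injective B ->
  (forall x, 0 <= g x) -> (forall x, g x = 0 <-> x = 0) ->
  is_decomposition A Xs ->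
  in_Gs Xs g ->
  (0 < T)%N ->
  is_cost_to_go A B fullv fullv g T J ->
  (forall i, is_cost_to_go A B (Esub B (Xs i)) (Xs i) g T (Jbar i)) ->
  (forall x t, (t < T)%N ->
     exists u, in_argmin (fun _ => True) (fun v => J t.+1 (A x + B v)) u
               /\ u \in (\sum_(i < r) Esub B (Xs i))%VS) ->
  forall t, (t <= T)%N -> forall i z, z \in Xs i -> J t z = Jbar i t z.
Proof.
move=> _ g_ge0 g_eq0 [_ Xs_full Xs_direct A_stable] [_ g_sep] _ J_cost Jbar_cost
  argmin_in_sum t leT i z z_in.
have g0 : g 0 = 0 by apply/g_eq0.
have Jbar0 j : Jbar j t 0 = 0.
  apply: cost_to_go0 (Jbar_cost j) g_ge0 g0 _ _ t leT => [y y_in | u].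
    exact: subvP (A_stable j) _ (memv_img A y_in).
  by rewrite memv_preim.
rewrite (cost_to_go_sep Xs_full Xs_direct A_stable g_sep J_cost Jbar_cost
  argmin_in_sum leT) (bigD1 i) //= (rho_summand Xs_full Xs_direct i z_in) eqxx.
rewrite big1 ?addr0 // => j /negPf neq_ji.
by rewrite (rho_summand Xs_full Xs_direct j z_in) neq_ji Jbar0.
Qed.
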